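(* Let $a,b \ge 3$ be odd coprime integers. Let $G = \mathbb{D}_8^* \times_{\mathbb{Z}_2} \mathbb{D}_{4a}^* \times \mathbb{Z}_b$, where $\mathbb{D}_8^* \times_{\mathbb{Z}_2} \mathbb{D}_{4a}^*$ is the central product of $\mathbb{D}_8^*$ and $\mathbb{D}_{4a}^*$ obtained from their direct product by identifying their unique central involutions. Then $G$ does not admit a faithful orientation-preserving linear (orthogonal) action on $S^3$, i.e. $G$ is not isomorphic to a subgroup of $\mathrm{SO}(4)$.
   Context: $\mathbb{D}_{4m}^*$ denotes the binary dihedral (generalized quaternion) group of order $4m$, $\langle u,v \mid u^{2m}=1,\ v^2=u^m,\ vuv^{-1}=u^{-1}\rangle$; in particular $\mathbb{D}_8^*$ is the quaternion group of order 8. $\mathbb{Z}_b$ is the cyclic group of order $b$. *)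

From HB Require Import structures.
From mathcomp Require Import all_boot all_order all_algebra all_fingroup all_solvable all_field all_character.
From mathcomp Require Import reals.
Set Implicit Arguments. Unset Strict Implicit. Unset Printing Implicit Defensive.
Import GroupScope.

(* H is isomorphic to the binary dihedral group D*_{4m} of order 4m,
   <u, v | u^(2m) = 1, v^2 = u^m, v u v^-1 = u^-1>.
   (In MathComp, u ^ v = v^-1 * u * v; the relation v^-1 u v = u^-1 is
   equivalent to v u v^-1 = u^-1.) *)
Definition binary_dihedral_isog (gT : finGroupType) (H : {set gT}) (m : nat) :=
  H \isog Grp (u : v : (u ^+ (2 * m) = 1, v ^+ 2 = u ^+ m, u ^ v = u^-1)).

Definition in_SO (R : realType) (n : nat) (M : 'M[R]_n) : Prop :=
  (M *m M^T = 1%:M /\ \det M = 1)%R.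

From HB Require Import structures.
From mathcomp Require Import all_boot all_order all_algebra all_fingroup all_solvable all_field all_character.
From mathcomp Require Import reals.
From mathcomp Require Import ring lra.

(* Let rho : G -> O(4) be faithful, and let i, j generate Q8 and z generate Z_b.
   For any v in the (-1)-eigenspace of C = rho(i)^2 the vectors v, rho(i) v,
   rho(j) v, rho(i) rho(j) v are pairwise orthogonal of equal length, hence a
   frame on which C acts as -1; so C = -1 and rho(i), rho(j) make R^4 a free
   rank one module over the quaternions H.  The commutant of rho(i), rho(j) is
   then a copy of H (a matrix in it is determined by the image of one vector),
   and contains rho(D) and rho(z).  As z has odd order and z <> 1,
   N = rho(z) - rho(z)^T is a nonzero skew element of it, i.e. a nonzero pure
   quaternion, whose centralizer in H is R + R N, a commutative algebra.  Hence
   rho(D) would be abelian, whereas D*_{4a} maps onto the dihedral group of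
   order 2a. *)

Set Implicit Arguments. Unset Strict Implicit. Unset Printing Implicit Defensive.
Import GRing.Theory Num.Theory.
Local Open Scope ring_scope.

Section VectorDot.
Variables (R : realFieldType) (n : nat).
Implicit Types (u w : 'cV[R]_n) (M : 'M[R]_n).

Definition vdot u w : R := (u^T *m w) 0 0.

Lemma vdotC u w : vdot u w = vdot w u.
Proof. by rewrite /vdot -[w^T *m u]trmxK trmx_mul trmxK [in RHS]mxE. Qed.

Lemma vdotNr u w : vdot u (- w) = - vdot u w.
Proof. by rewrite /vdot mulmxN mxE. Qed.

Lemma vdot_orthmx M u w : M^T *m M = 1%:M -> vdot (M *m u) (M *m w) = vdot u w.
Proof. by move=> MtM; rewrite /vdot trmx_mul mulmxA -(mulmxA _ _ M) MtM mulmx1. Qed.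

Lemma vdotE u w : vdot u w = \sum_i u i 0 * w i 0.
Proof. by rewrite /vdot mxE; apply: eq_bigr => i _; rewrite mxE. Qed.

Lemma vdot_self_eq0 u : (vdot u u == 0) = (u == 0).
Proof.
apply/idP/eqP => [uu0 | ->]; last by rewrite /vdot mulmx0 mxE.
have uuE : vdot u u = \sum_i u i 0 ^+ 2.
  by rewrite vdotE; apply: eq_bigr => i _; rewrite expr2.
apply/colP => i; rewrite mxE; apply/eqP; rewrite -sqrf_eq0; apply/eqP.
by rewrite (psumr_eq0P (fun k _ => sqr_ge0 (u k 0)) (etrans (esym uuE) (eqP uu0))).
Qed.

Lemma vdot_eqNr_eq0 u w : vdot u w = - vdot u w -> vdot u w = 0.
Proof. by move/esym/eqP; rewrite eqNr => /eqP. Qed.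

Lemma vdot_orthmx_sqrN M u :
  M^T *m M = 1%:M -> M *m (M *m u) = - u -> vdot u (M *m u) = 0.
Proof.
move=> MtM MMu; apply: vdot_eqNr_eq0.
by rewrite -{1}(vdot_orthmx u (M *m u) MtM) MMu vdotNr vdotC.
Qed.

Lemma vdot_skewmx M u : M^T = - M -> vdot u (M *m u) = 0.
Proof.
move=> Mt; apply: vdot_eqNr_eq0.
by rewrite {1}vdotC /vdot trmx_mul Mt mulmxN mulNmx mulmxA [LHS]mxE.
Qed.

End VectorDot.

Lemma big_ord4 (V : nmodType) (F : 'I_4 -> V) :
  \sum_(i < 4) F i = F 0 + F 1 + F 2 + F 3.
Proof.
rewrite !big_ord_recr big_ord0 /= add0r.
by congr (F _ + F _ + F _ + F _); apply: val_inj.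
Qed.

Lemma ord4P (P : 'I_4 -> Prop) : P 0 -> P 1 -> P 2 -> P 3 -> forall k, P k.
Proof.
move=> P0 P1 P2 P3 [[|[|[|[|//]]]] lt_k4].
- by rewrite (_ : Ordinal lt_k4 = 0) //; apply: val_inj.
- by rewrite (_ : Ordinal lt_k4 = 1) //; apply: val_inj.
- by rewrite (_ : Ordinal lt_k4 = 2) //; apply: val_inj.
by rewrite (_ : Ordinal lt_k4 = 3) //; apply: val_inj.
Qed.

Section QuaternionFrame.
Variables (R : realFieldType) (I J : 'M[R]_4).

Definition qunit (k : 'I_4) : 'M[R]_4 :=
  match val k with 0 => 1%:M | 1 => I | 2 => J | _ => I *m J end.

Definition quat (a : 'cV[R]_4) : 'M[R]_4 := \sum_k a k 0 *: qunit k.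

Definition frame (v : 'cV[R]_4) : 'M[R]_4 := \matrix_(i, k) (qunit k *m v) i 0.

Lemma frame_mul v a : frame v *m a = quat a *m v.
Proof.
apply/colP => i; rewrite /quat mulmx_suml summxE !mxE.
by apply: eq_bigr => k _; rewrite -scalemxAl !mxE mulrC.
Qed.

Lemma comm_mx_qunit M k : comm_mx M I -> comm_mx M J -> comm_mx M (qunit k).
Proof.
move=> MI MJ; case: k => [[|[|[|k]]] ?]; rewrite /qunit //=.
  exact: comm_mx1.
exact: comm_mxM.
Qed.

Lemma mulmx_frame M v : comm_mx M I -> comm_mx M J -> M *m frame v = frame (M *m v).
Proof.
move=> MI MJ; apply/matrixP => i k.
rewrite [RHS]mxE mulmxA -(comm_mx_qunit k MI MJ) -mulmxA !mxE.
by apply: eq_bigr => j _; rewrite mxE.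
Qed.

Let C := I *m I.
Hypotheses (I_orth : I^T *m I = 1%:M) (J_orth : J^T *m J = 1%:M).
Hypotheses (JJ : J *m J = C) (IJ : I *m J = J *m I *m C).
Variable v : 'cV[R]_4.
Hypotheses (Cv : C *m v = - v) (v_neq0 : v != 0).

Lemma qunit_orth k : (qunit k)^T *m qunit k = 1%:M.
Proof.
case: k => [[|[|[|k]]] ?]; rewrite /qunit //= ?trmx1 ?mul1mx //.
by rewrite trmx_mul mulmxA -(mulmxA _ _ I) I_orth mulmx1.
Qed.

Let CJv : C *m (J *m v) = - (J *m v).
Proof. by rewrite -JJ !mulmxA -[J *m J *m J]mulmxA JJ -mulmxA Cv mulmxN. Qed.

Let IJ_anti (w : 'cV[R]_4) : C *m w = - w -> I *m (J *m w) = - (J *m (I *m w)).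
Proof. by move=> Cw; rewrite mulmxA IJ -mulmxA Cw mulmxN -mulmxA. Qed.

Let IJIJv : I *m (J *m (I *m (J *m v))) = - v.
Proof.
have := IJ_anti CJv; rewrite [J *m (J *m v)]mulmxA JJ Cv mulmxN => /oppr_inj <-.
by rewrite mulmxA.
Qed.

Let IIJv : I *m (I *m (J *m v)) = - (J *m v).
Proof. by rewrite mulmxA CJv. Qed.

Let vdot_v_Iv : vdot v (I *m v) = 0.
Proof. by apply: vdot_orthmx_sqrN; rewrite // mulmxA. Qed.

Let vdot_v_Jv : vdot v (J *m v) = 0.
Proof. by apply: vdot_orthmx_sqrN; rewrite // mulmxA JJ. Qed.

Let vdot_v_IJv : vdot v (I *m (J *m v)) = 0.
Proof.
by rewrite mulmxA; apply: vdot_orthmx_sqrN (qunit_orth 3) _; rewrite -!mulmxA IJIJv.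
Qed.

Let vdot_Iv_Jv : vdot (I *m v) (J *m v) = 0.
Proof. by rewrite -[J *m v]opprK -IIJv vdotNr vdot_orthmx // vdot_v_IJv oppr0. Qed.

Let vdot_Iv_IJv : vdot (I *m v) (I *m (J *m v)) = 0.
Proof. by rewrite vdot_orthmx. Qed.

Let vdot_Jv_IJv : vdot (J *m v) (I *m (J *m v)) = 0.
Proof. by rewrite (IJ_anti Cv) vdotNr vdot_orthmx // vdot_v_Iv oppr0. Qed.

Lemma frame_gram j k : vdot (qunit j *m v) (qunit k *m v) = vdot v v *+ (j == k).
Proof.
have qunit_vdot l : vdot (qunit l *m v) (qunit l *m v) = vdot v v.
  exact/vdot_orthmx/qunit_orth.
case: (eqVneq j k) => [<- | ]; first by rewrite qunit_vdot.
case: j k => [[|[|[|[|//]]]] ?] [[|[|[|[|//]]]] ?] //= _.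
all: by rewrite /qunit /= ?mul1mx -?mulmxA mulr0n // vdotC.
Qed.

Lemma trmx_frame_mulE w k : ((frame v)^T *m w) k 0 = vdot (qunit k *m v) w.
Proof. by rewrite vdotE mxE; apply: eq_bigr => i _; rewrite !mxE. Qed.

Lemma trmx_frame_mul : (frame v)^T *m frame v = (vdot v v)%:M.
Proof.
apply/matrixP => j k; rewrite !mxE -frame_gram vdotE.
by apply: eq_bigr => i _; rewrite !mxE.
Qed.

Definition frame_inv := (vdot v v)^-1 *: (frame v)^T.

Lemma frame_invK : frame_inv *m frame v = 1%:M.
Proof.
by rewrite /frame_inv -scalemxAl trmx_frame_mul scale_scalar_mx mulVf ?vdot_self_eq0.
Qed.

Lemma frameK : frame v *m frame_inv = 1%:M.
Proof. exact/mulmx1C/frame_invK. Qed.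

Lemma commutant_eval_inj M M' :
  comm_mx M I -> comm_mx M J -> comm_mx M' I -> comm_mx M' J ->
  M *m v = M' *m v -> M = M'.
Proof.
move=> MI MJ M'I M'J Mv.
rewrite -[M]mulmx1 -[M']mulmx1 -frameK !mulmxA.
by rewrite !mulmx_frame // Mv.
Qed.

End QuaternionFrame.

Lemma orth_Q8_sqrN1 (R : realFieldType) (I J : 'M[R]_4) :
  I^T *m I = 1%:M -> J^T *m J = 1%:M -> J *m J = I *m I ->
  I *m J = J *m I *m (I *m I) -> (I *m I) *m (I *m I) = 1%:M -> I *m I != 1%:M ->
  I *m I = - 1%:M.
Proof.
move=> I_orth J_orth JJ IJ CC C_neq1; set C := I *m I in JJ IJ CC C_neq1 *.
have [j Cej] : exists j, C *m delta_mx j 0 != delta_mx j 0 :> 'cV[R]_4.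
  apply/existsP; apply: contraR C_neq1 => /existsPn Ce; apply/eqP/matrixP => i j.
  by move/negPn/eqP/colP/(_ i): (Ce j); rewrite -colE !mxE andbT.
pose v : 'cV[R]_4 := delta_mx j 0 - C *m delta_mx j 0.
have Cv : C *m v = - v by rewrite mulmxBr mulmxA CC mul1mx opprB.
have v_neq0 : v != 0 by rewrite subr_eq0 eq_sym.
apply: (commutant_eval_inj I_orth J_orth JJ IJ Cv v_neq0).
- by rewrite /comm_mx /C !mulmxA.
- by rewrite /comm_mx -JJ !mulmxA.
- exact/comm_mx_sym/comm_mxN1.
- exact/comm_mx_sym/comm_mxN1.
by rewrite Cv mulNmx mul1mx.
Qed.

Lemma comm_mx_affine (R : comPzRingType) n c d (A B : 'M[R]_n) :
  comm_mx A B -> comm_mx (c%:M + d *: A) B.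
Proof.
move=> AB; rewrite /comm_mx mulmxDl mulmxDr mul_scalar_mx mul_mx_scalar.
by rewrite -scalemxAl -scalemxAr AB.
Qed.

Lemma parallel_of_cross0 (R : comNzRingType) (n1 n2 n3 x1 x2 x3 : R) :
  n2 * x3 = n3 * x2 -> n3 * x1 = n1 * x3 -> n1 * x2 = n2 * x1 ->
  (n1 ^+ 2 + n2 ^+ 2 + n3 ^+ 2) * x1 = (n1 * x1 + n2 * x2 + n3 * x3) * n1.
Proof.
move=> c1 c2 c3.
transitivity (n1 ^+ 2 * x1 + n2 * (n2 * x1) + n3 * (n3 * x1)); first by ring.
by rewrite -c3 c2; ring.
Qed.

Section QuaternionAlgebra.
Variables (R : realFieldType) (I J : 'M[R]_4).

Fact quat_is_linear : linear (quat I J).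
Proof.
move=> c a b; rewrite /quat scaler_sumr -big_split; apply: eq_bigr => k _.
by rewrite !mxE scalerDl scalerA.
Qed.

HB.instance Definition _ :=
  GRing.isLinear.Build R 'cV[R]_4 'M[R]_4 _ (quat I J) quat_is_linear.

Lemma quat_delta c l : quat I J (c *: delta_mx l 0) = c *: qunit I J l.
Proof.
rewrite linearZ /= /quat (bigD1 l) //= big1 => [|k kl].
  by rewrite mxE !eqxx scale1r addr0.
by rewrite mxE (negbTE kl) scale0r.
Qed.

Definition qindex (j k : 'I_4) : 'I_4 :=
  match val j, val k with
  | 0, _ => k | _, 0 => j
  | 1, 1 | 2, 2 | 3, 3 => 0
  | 1, 2 | 2, 1 => 3
  | 1, 3 | 3, 1 => 2
  | _, _ => 1 end.

Definition qsign (j k : 'I_4) : R :=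
  match val j, val k with
  | 0, _ | _, 0 | 1, 2 | 2, 3 | 3, 1 => 1
  | _, _ => -1 end.

Hypotheses (II : I *m I = - 1%:M) (JJ : J *m J = - 1%:M) (IJ : I *m J = - (J *m I)).

Lemma qunit_mul j k :
  qunit I J j *m qunit I J k = qsign j k *: qunit I J (qindex j k).
Proof.
have JI : J *m I = - (I *m J) by rewrite IJ opprK.
case: j k => [[|[|[|[|//]]]] ?] [[|[|[|[|//]]]] ?];
  rewrite /qunit /qsign /qindex /= ?scale1r ?scaleN1r ?mul1mx ?mulmx1 //.
- by rewrite mulmxA II mulNmx mul1mx.
- by rewrite mulmxA JI mulNmx -mulmxA JJ mulmxN mulmx1 opprK.
- by rewrite -mulmxA JI mulmxN mulmxA II mulNmx mul1mx opprK.
- by rewrite -mulmxA JJ mulmxN mulmx1.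
by rewrite mulmxA -(mulmxA I J I) JI mulmxN mulmxA II !mulNmx mul1mx opprK JJ.
Qed.

Definition qmul (a b : 'cV[R]_4) : 'cV[R]_4 :=
  \sum_j \sum_k (a j 0 * b k 0 * qsign j k) *: delta_mx (qindex j k) 0.

Lemma quat_mul a b : quat I J a *m quat I J b = quat I J (qmul a b).
Proof.
rewrite [in LHS]/quat mulmx_suml linear_sum; apply: eq_bigr => j _.
rewrite mulmx_sumr linear_sum; apply: eq_bigr => k _ /=.
by rewrite -scalemxAl -scalemxAr qunit_mul quat_delta !scalerA.
Qed.

Lemma qmul_comm_cross a b : qmul a b = qmul b a ->
  [/\ a 2 0 * b 3 0 = a 3 0 * b 2 0, a 3 0 * b 1 0 = a 1 0 * b 3 0
     & a 1 0 * b 2 0 = a 2 0 * b 1 0].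
Proof.
move/colP => ab; have := ab 1; have := ab 2; have := ab 3.
rewrite /qmul !summxE !big_ord4 !mxE /qsign /= => e3 e2 e1.
by split; lra.
Qed.

Lemma qmul_comm_pure (n x : 'cV[R]_4) :
  n 0 0 = 0 -> n != 0 -> qmul n x = qmul x n ->
  x = x 0 0 *: delta_mx 0 0 + (vdot n x / vdot n n) *: n.
Proof.
move=> n0 n_neq0 /qmul_comm_cross [c1 c2 c3].
have nn_neq0 : vdot n n != 0 by rewrite vdot_self_eq0.
suff nnx : vdot n n *: x = (vdot n n * x 0 0) *: delta_mx 0 0 + vdot n x *: n.
  by apply: (scalerI nn_neq0); rewrite nnx scalerDr !scalerA mulrCA mulfV ?mulr1.
apply/colP; apply: ord4P; rewrite !mxE !vdotE !big_ord4 n0 /=.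
- by ring.
- by have := parallel_of_cross0 c1 c2 c3; lra.
- by have := parallel_of_cross0 c2 c3 c1; lra.
by have := parallel_of_cross0 c3 c1 c2; lra.
Qed.

Hypotheses (I_orth : I^T *m I = 1%:M) (J_orth : J^T *m J = 1%:M).

Let v : 'cV[R]_4 := delta_mx 0 0.
Let JJ_II : J *m J = I *m I. Proof. by rewrite JJ II. Qed.
Let IJ_JIII : I *m J = J *m I *m (I *m I). Proof. by rewrite II mulmxN mulmx1. Qed.
Let IIv : I *m I *m v = - v. Proof. by rewrite II mulNmx mul1mx. Qed.
Let v_neq0 : v != 0.
Proof. by apply/negP => /eqP/colP/(_ 0); rewrite !mxE /= => /eqP; rewrite oner_eq0. Qed.
Let frame_vK := frameK I_orth J_orth JJ_II IJ_JIII IIv v_neq0.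
Let frame_inv_vK := frame_invK I_orth J_orth JJ_II IJ_JIII IIv v_neq0.
Let eval_v_inj := commutant_eval_inj I_orth J_orth JJ_II IJ_JIII IIv v_neq0.

Definition qcoord (M : 'M[R]_4) : 'cV[R]_4 := frame_inv I J v *m (M *m v).

Lemma commutant_quat M :
  comm_mx M I -> comm_mx M J -> M *m v = quat I J (qcoord M) *m v.
Proof. by move=> MI MJ; rewrite -frame_mul mulmxA frame_vK mul1mx. Qed.

Lemma comm_mx_quat M a : comm_mx M I -> comm_mx M J -> comm_mx M (quat I J a).
Proof.
move=> MI MJ; apply: comm_mx_sum => k _.
by rewrite /comm_mx -scalemxAl -scalemxAr (comm_mx_qunit k MI MJ).
Qed.

Lemma qcoord_mul M M' :
  comm_mx M I -> comm_mx M J -> comm_mx M' I -> comm_mx M' J ->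
  qcoord (M *m M') = qmul (qcoord M') (qcoord M).
Proof.
move=> MI MJ M'I M'J; rewrite {1}/qcoord -mulmxA (commutant_quat M'I M'J) mulmxA.
rewrite (comm_mx_quat _ MI MJ) -mulmxA (commutant_quat MI MJ) mulmxA quat_mul.
by rewrite -frame_mul mulmxA frame_inv_vK mul1mx.
Qed.

Lemma qcoord_inj M M' :
  comm_mx M I -> comm_mx M J -> comm_mx M' I -> comm_mx M' J ->
  qcoord M = qcoord M' -> M = M'.
Proof.
move=> MI MJ M'I M'J eqMM'; apply: eval_v_inj => //.
by rewrite (commutant_quat MI MJ) (commutant_quat M'I M'J) eqMM'.
Qed.

Lemma qcoord_skew N : N^T = - N -> qcoord N 0 0 = 0.
Proof.
move=> Nt; rewrite /qcoord /frame_inv -scalemxAl mxE trmx_frame_mulE.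
by rewrite (_ : qunit I J 0 = 1%:M) // mul1mx vdot_skewmx ?mulr0.
Qed.

Lemma qcoord_affine c d N :
  qcoord (c%:M + d *: N) = c *: delta_mx 0 0 + d *: qcoord N.
Proof.
have frame_e0 : frame I J v *m delta_mx 0 0 = v.
  by rewrite frame_mul -[delta_mx 0 0]scale1r quat_delta scale1r mul1mx.
rewrite /qcoord mulmxDl mul_scalar_mx -scalemxAl mulmxDr -!scalemxAr.
by rewrite -[X in c *: (_ *m X)]frame_e0 mulmxA frame_inv_vK mul1mx.
Qed.

Lemma commutant_centralizer_skew N X :
  comm_mx N I -> comm_mx N J -> N^T = - N -> N != 0 ->
  comm_mx X I -> comm_mx X J -> comm_mx X N ->
  exists c d, X = c%:M + d *: N.
Proof.
move=> NI NJ Nt N_neq0 XI XJ XN.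
have n_neq0 : qcoord N != 0.
  apply: contraNneq N_neq0 => n0; apply/eqP/qcoord_inj => //.
  - exact/comm_mx_sym/comm_mx0.
  - exact/comm_mx_sym/comm_mx0.
  by rewrite n0 /qcoord mul0mx mulmx0.
have nx : qmul (qcoord N) (qcoord X) = qmul (qcoord X) (qcoord N).
  by rewrite -!qcoord_mul // XN.
exists (qcoord X 0 0), (vdot (qcoord N) (qcoord X) / vdot (qcoord N) (qcoord N)).
apply: qcoord_inj => //; try exact: comm_mx_affine.
by rewrite qcoord_affine -qmul_comm_pure // qcoord_skew.
Qed.

Lemma commutant_comm_of_skew N X Y :
  comm_mx N I -> comm_mx N J -> N^T = - N -> N != 0 ->
  comm_mx X I -> comm_mx X J -> comm_mx X N ->
  comm_mx Y I -> comm_mx Y J -> comm_mx Y N -> comm_mx X Y.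
Proof.
move=> NI NJ Nt N_neq0 XI XJ XN YI YJ YN.
have [c [d ->]] := commutant_centralizer_skew NI NJ Nt N_neq0 XI XJ XN.
have [c' [d' ->]] := commutant_centralizer_skew NI NJ Nt N_neq0 YI YJ YN.
exact/comm_mx_affine/comm_mx_sym/comm_mx_affine/comm_mx_refl.
Qed.

End QuaternionAlgebra.

Lemma comm_mx_trmx_orth (R : comUnitRingType) n (W M : 'M[R]_n) :
  W^T *m W = 1%:M -> comm_mx W M -> comm_mx W^T M.
Proof.
move=> WtW WM; rewrite /comm_mx -[W^T *m M]mulmx1 -(mulmx1C WtW) !mulmxA.
by rewrite -(mulmxA _ M) -WM mulmxA WtW mul1mx.
Qed.

Lemma orth_sym_expr_odd (R : comUnitRingType) n (W : 'M[R]_n.+1) b :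
  W^T *m W = 1%:M -> W^T = W -> odd b -> W ^+ b = W.
Proof.
move=> WtW Wt ob; have W2 : W ^+ 2 = 1 by rewrite expr2 -{1}Wt.
by rewrite -(odd_double_half b) ob -mul2n exprD expr1 exprM W2 expr1n mulr1.
Qed.

Lemma orth_Q8_centralizer_comm (R : realFieldType) (I J W X Y : 'M[R]_4) b :
  I^T *m I = 1%:M -> J^T *m J = 1%:M -> W^T *m W = 1%:M ->
  J *m J = I *m I -> I *m J = J *m I *m (I *m I) ->
  (I *m I) *m (I *m I) = 1%:M -> I *m I != 1%:M ->
  odd b -> W ^+ b = 1 -> W != 1 ->
  comm_mx W I -> comm_mx W J -> comm_mx W X -> comm_mx W Y ->
  comm_mx X I -> comm_mx X J -> comm_mx Y I -> comm_mx Y J ->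
  comm_mx X Y.
Proof.
move=> I_orth J_orth W_orth JJ IJ CC C_neq1 ob Wb W_neq1 WI WJ WX WY XI XJ YI YJ.
have II := orth_Q8_sqrN1 I_orth J_orth JJ IJ CC C_neq1.
have JJ' : J *m J = - 1%:M by rewrite JJ II.
have IJ' : I *m J = - (J *m I) by rewrite IJ II mulmxN mulmx1.
pose N := W - W^T.
have N_comm M : comm_mx W M -> comm_mx N M.
  move=> WM; apply/comm_mx_sym/comm_mxB; apply/comm_mx_sym => //.
  exact: comm_mx_trmx_orth.
have Nt : N^T = - N by rewrite /N linearB /= trmxK opprB.
have N_neq0 : N != 0.
  apply: contra W_neq1; rewrite subr_eq0 => /eqP Wt.
  by rewrite -Wb orth_sym_expr_odd.
apply: (commutant_comm_of_skew II JJ' IJ' I_orth J_orth (N_comm _ WI) (N_comm _ WJ))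
  => //; exact/comm_mx_sym/N_comm.
Qed.

Local Close Scope ring_scope.
Import GroupScope.

Section BinaryDihedralGroups.
Variable gT : finGroupType.
Implicit Types Q D Z G : {group gT}.

Lemma quaternion8_generators Q : binary_dihedral_isog Q 2 ->
  exists i j, [/\ i \in Q, j \in Q, #[i] = 4, j ^+ 2 = i ^+ 2 & i ^ j = i^-1].
Proof.
move=> isoQ; have isoQ8 : Q \isog 'Q_(2 ^ 3).
  rewrite isogEhom (Grp_quaternion (n := 3)) // (isoGrp_hom isoQ) /=.
  by rewrite isoQ (isoGrp_hom (Grp_quaternion (n := 3) isT)).
have [[i j] [_ Qi oi /setDP[Qj _]] [_ j2 ij]] :=
  generators_quaternion (n := 3) isT isoQ8.
by exists i, j.
Qed.

Lemma binary_dihedral_odd_nonabelian D a :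
  odd a -> 2 < a -> binary_dihedral_isog D a -> ~~ abelian D.
Proof.
move=> oa a_gt2 isoD; have a_gt1 : 1 < a by apply: ltnW.
have [[x y] /= /eqP[defDih xa y2 xy]] := existsP (isoGrp_hom (Grp_dihedral a_gt1)).
have Dih_hom : 'D_(a.*2) \homg D.
  have x2a : x ^+ (2 * a) = 1 by rewrite mulnC expgM xa expg1n.
  rewrite isoD; apply/existsP; exists (x, y); rewrite /= !xpair_eqE /=.
  by apply/and4P; split; apply/eqP; rewrite ?y2 ?xa.
apply/negP => abD; have [f /= defDihf] := homgP Dih_hom.
have abDih : abelian 'D_(a.*2) by rewrite -defDihf morphim_abelian.
have Dx : x \in 'D_(a.*2) by rewrite -defDih mem_gen // inE cycle_id.
have Dy : y \in 'D_(a.*2) by rewrite -defDih mem_gen // inE cycle_id orbT.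
have xV : x^-1 = x by rewrite -xy; apply/conjg_fixP/commgP/(centsP abDih).
have x1 : x = 1.
  apply/eqP; rewrite -order_eq1 -dvdn1 -(eqnP (_ : coprime 2 a)) ?coprime2n //.
  by rewrite dvdn_gcd !order_dvdn xa expgS expg1 -{1}xV mulVg !eqxx.
have : #|'D_(a.*2)| <= 2.
  by rewrite -defDih x1 cycle1 joing1G -orderE dvdn_leq // order_dvdn y2.
by rewrite card_dihedral // -addnn => /(leq_trans (leq_add a_gt2 a_gt2)).
Qed.

Lemma cprod_dprod_cents Q D Z G : (Q \* D) \x Z = G ->
  [/\ Q \subset G, D \subset G, Z \subset G, D \subset 'C(Q)
     & Z \subset 'C(Q) :&: 'C(D)].
Proof.
case/dprodP=> [[K _ defK _] defG cKZ _]; rewrite defK in defG cKZ.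
case/cprodP: defK => _ defK cQD.
have sQK : Q \subset K by rewrite -defK mulG_subl.
have sDK : D \subset K by rewrite -defK mulG_subr.
have sKG : K \subset G by rewrite -defG mulG_subl.
split=> //; first exact: subset_trans sQK sKG.
- exact: subset_trans sDK sKG.
- by rewrite -defG mulG_subr.
by rewrite subsetI !(subset_trans cKZ) ?centS.
Qed.

End BinaryDihedralGroups.

Section OrthogonalRepresentation.
Variables (R : realFieldType) (gT : finGroupType) (G : {group gT}).
Variable rG : mx_representation R G 4.
Hypotheses (rG_inj : mx_faithful rG).
Hypothesis rG_orth : {in G, forall g, ((rG g)^T *m rG g = 1%:M)%R}.

Lemma repr_comm_mx g h : g \in G -> h \in G -> commute g h -> comm_mx (rG g) (rG h).
Proof. by move=> Gg Gh; rewrite /comm_mx -!repr_mxM // => ->. Qed.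

Lemma repr_neq1 g : g \in G -> g != 1 -> (rG g != 1%:M)%R.
Proof.
move=> Gg; apply: contra => /eqP rGg1; apply/eqP/(mx_faithful_inj rG_inj) => //.
by rewrite rGg1 repr_mx1.
Qed.

Lemma faithful_orth_Q8_centralizer_comm i j z x y :
  i \in G -> j \in G -> z \in G -> x \in G -> y \in G ->
  #[i] = 4 -> j ^+ 2 = i ^+ 2 -> i ^ j = i^-1 -> odd #[z] -> z != 1 ->
  commute z i -> commute z j -> commute z x -> commute z y ->
  commute x i -> commute x j -> commute y i -> commute y j -> commute x y.
Proof.
move=> Gi Gj Gz Gx Gy oi j2 ij oz z_neq1 zi zj zx zy xi xj yi yj.
have jj : j * j = i * i by move: j2; rewrite (expgS j 1) (expgS i 1) !expg1.
have i4 : i * i * (i * i) = 1.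
  by have := expg_order i; rewrite oi !expgS expg0 mulg1 !mulgA.
have ij' : i * j = j * i * (i * i).
  by rewrite conjgC ij invg_expg oi /= !expgS expg0 mulg1 !mulgA.
have i2_neq1 : i * i != 1.
  by apply/eqP => i2; have := order_dvdn i 2; rewrite oi (expgS i 1) expg1 i2 eqxx.
apply: (mx_faithful_inj rG_inj); rewrite ?groupM // !repr_mxM //.
apply: (orth_Q8_centralizer_comm (b := #[z]) (rG_orth Gi) (rG_orth Gj) (rG_orth Gz));
  rewrite -?repr_mxM ?groupM ?jj ?i4 ?ij' ?repr_mx1 ?repr_neq1 ?groupM //;
  try exact: repr_comm_mx.
by rewrite -repr_mxX // expg_order repr_mx1.
Qed.

End OrthogonalRepresentation.

Theorem mainTheorem6 (a b : nat) (gT : finGroupType) (G Q D Z : {group gT}) :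
  odd a -> odd b -> 3 <= a -> 3 <= b -> coprime a b ->
  binary_dihedral_isog Q 2 ->
  binary_dihedral_isog D a ->
  #|Q :&: D| = 2 ->
  cyclic Z -> #|Z| = b ->
  (Q \* D) \x Z = G ->
  forall R : realType,
    ~ exists rG : mx_representation R G 4,
        mx_faithful rG /\ (forall x, x \in G -> in_SO (rG x)).
Proof.
move=> oa ob a_gt2 b_gt2 _ isoQ isoD _ cycZ oZ defG R [rG [rG_inj rG_SO]].
have rG_orth : {in G, forall g, ((rG g)^T *m rG g = 1%:M)%R}.
  by move=> g /rG_SO[/mulmx1C].
have [sQG sDG sZG cQD /subsetIP[cQZ cDZ]] := cprod_dprod_cents defG.
have [i [j [Qi Qj oi j2 ij]]] := quaternion8_generators isoQ.
have [z defZ] := cyclicP cycZ; have Zz : z \in Z by rewrite defZ cycle_id.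
have oz : #[z] = b by rewrite orderE -defZ.
have z_neq1 : z != 1 by rewrite -order_eq1 oz gtn_eqF // ltnW.
apply: (negP (binary_dihedral_odd_nonabelian oa a_gt2 isoD)).
apply/centsP => x Dx y Dy.
have [inQG inDG] := (subsetP sQG, subsetP sDG).
apply: (faithful_orth_Q8_centralizer_comm rG_inj rG_orth (inQG i Qi) (inQG j Qj)
  (subsetP sZG z Zz) (inDG x Dx) (inDG y Dy) oi j2 ij _ z_neq1); rewrite ?oz //.
all: by [apply: (centsP cQZ) | apply: (centsP cDZ) | apply: (centsP cQD)].
Qed.
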